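(* Let $n\ge2$, let $u$ be a polar $n$-complex number and $m$ an integer; if $m\le0$ assume $v_+\ne0$, $v_-\ne0$ (for even $n$) and $\rho_k\ne0$ for all $k$. Then, for even $n$, $$u^m=e_+v_+^m+e_-v_-^m+\sum_{k=1}^{n/2-1}\rho_k^m\big(e_k\cos m\phi_k+\tilde e_k\sin m\phi_k\big),$$ and for odd $n$, $$u^m=e_+v_+^m+\sum_{k=1}^{(n-1)/2}\rho_k^m\big(e_k\cos m\phi_k+\tilde e_k\sin m\phi_k\big),$$ where a term with $\rho_k=0$ (possible only for $m\ge1$) is interpreted as $0$.
   Context: Polar $n$-complex numbers: $u=x_0+h_1x_1+\cdots+h_{n-1}x_{n-1}$, $x_j\in\mathbb{R}$, $h_0=1$, componentwise addition, bilinear multiplication $h_jh_k=h_{(j+k)\bmod n}$. Canonical variables: $v_+=\sum_px_p$; for even $n$, $v_-=\sum_p(-1)^px_p$; for $k=1,\dots,\lfloor(n-1)/2\rfloor$, $v_k=\sum_px_p\cos(2\pi kp/n)$, $\tilde v_k=\sum_px_p\sin(2\pi kp/n)$, $\rho_k=\sqrt{v_k^2+\tilde v_k^2}$, and for $\rho_k>0$, $\phi_k$ with $\cos\phi_k=v_k/\rho_k$, $\sin\phi_k=\tilde v_k/\rho_k$. Canonical base: $e_+=\frac1n\sum_ph_p$, $e_-=\frac1n\sum_p(-1)^ph_p$ (even $n$), $e_k=\frac2n\sum_p\cos(2\pi kp/n)h_p$, $\tilde e_k=\frac2n\sum_p\sin(2\pi kp/n)h_p$. *)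

From HB Require Import structures.
From mathcomp Require Import all_boot all_order all_algebra.
From mathcomp Require Import all_classical all_reals all_analysis.
From Stdlib Require Import ClassicalEpsilon.
Set Implicit Arguments. Unset Strict Implicit. Unset Printing Implicit Defensive.
Import Order.TTheory GRing.Theory Num.Theory.
Local Open Scope ring_scope.

Section PolarNComplex.
Variables (R : realType) (n : nat).

(* A polar n-complex number u = x_0 + h_1 x_1 + ... + h_{n-1} x_{n-1}
   is represented by its coordinate function x : 'I_n -> R. *)
Definition ncx := 'I_n -> R.

(* Addition is componentwise; multiplication is bilinear with
   h_j h_k = h_{(j+k) mod n}. *)
Definition ncx_mul (u w : ncx) : ncx := fun k =>
  \sum_(j < n) \sum_(l < n) (if ((j + l) %% n == k)%N then u j * w l else 0).

Definition ncx_one : ncx := fun k => if val k == 0%N then 1 else 0.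

Definition ncx_npow (u : ncx) (p : nat) : ncx := iter p (ncx_mul u) ncx_one.

(* the multiplicative inverse u^{-1} (an element w with u w = 1, chosen
   by classical choice; it exists and is unique when u is invertible) *)
Definition ncx_inv (u : ncx) : ncx :=
  epsilon (inhabits ncx_one) (fun w => ncx_mul u w = ncx_one).

Definition ncx_zpow (u : ncx) (m : int) : ncx :=
  match m with
  | Posz p => ncx_npow u p
  | Negz p => ncx_npow (ncx_inv u) p.+1
  end.

Definition ang (k p : nat) : R := 2 * pi * k%:R * p%:R / n%:R.

Definition v_plus (x : ncx) : R := \sum_(p < n) x p.
Definition v_minus (x : ncx) : R := \sum_(p < n) (-1) ^+ (val p) * x p.
Definition v_k (x : ncx) (k : nat) : R := \sum_(p < n) x p * cos (ang k p).
Definition vt_k (x : ncx) (k : nat) : R := \sum_(p < n) x p * sin (ang k p).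
Definition rho_k (x : ncx) (k : nat) : R := Num.sqrt (v_k x k ^+ 2 + vt_k x k ^+ 2).

Definition e_plus : ncx := fun p => n%:R^-1.
Definition e_minus : ncx := fun p => (-1) ^+ (val p) / n%:R.
Definition e_k (k : nat) : ncx := fun p => 2 / n%:R * cos (ang k p).
Definition et_k (k : nat) : ncx := fun p => 2 / n%:R * sin (ang k p).

End PolarNComplex.

(* With omega = exp(2 i pi / n), the discrete Fourier transform
   dft x j = sum_p x_p omega^(j p) sends h_p to omega^(j p), so it is an injective
   ring morphism into one copy of C per index j < n.  Its values are v_+ at j = 0,
   v_- at j = n/2, v_k + i vt_k = rho_k e^(i phi_k) at k and the conjugate at
   n - k.  The transform of u^m is therefore made of the m-th powers of these
   values, and inverting it, with the conjugate terms k and n - k paired into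
   twice a real part, gives the formula.  For m <= 0 the hypotheses make every
   transform value nonzero, which makes u invertible. *)

From mathcomp Require Import all_boot all_order all_algebra.
From mathcomp Require Import all_classical all_reals all_analysis.
From mathcomp Require Import complex ring lra zify.
From Stdlib Require Import ClassicalEpsilon.
Import Order.TTheory GRing.Theory Num.Theory.
Set Implicit Arguments. Unset Strict Implicit. Unset Printing Implicit Defensive.
Local Open Scope ring_scope.
Local Open Scope complex_scope.

Section PolarForm.
Variable R : realType.

(* Rewriting with [rmorphM] and friends leaves an [RMorphism.sort] head on which
   later rewrites keyed on [conjc] fail, hence these plain restatements. *)
Lemma conjcM (a b : R[i]) : conjc (a * b) = conjc a * conjc b.
Proof. exact: rmorphM. Qed.

Lemma conjcXn (a : R[i]) k : conjc (a ^+ k) = conjc a ^+ k.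
Proof. exact: rmorphXn. Qed.

Lemma conjcXz (a : R[i]) (m : int) : conjc (a ^ m) = conjc a ^ m.
Proof. exact: fmorphXz. Qed.

Lemma conjc_sum (I : Type) (r : seq I) (F : I -> R[i]) :
  conjc (\sum_(i <- r) F i) = \sum_(i <- r) conjc (F i).
Proof. exact: rmorph_sum. Qed.

Lemma conjc_real_complex (r : R) : conjc r%:C = r%:C.
Proof. by rewrite /= oppr0. Qed.

Definition cis (t : R) : R[i] := cos t +i* sin t.

Lemma cis0 : cis 0 = 1.
Proof. by rewrite /cis cos0 sin0. Qed.

Lemma cisD a b : cis (a + b) = cis a * cis b.
Proof. by rewrite /cis cosD sinD; simpc; congr Complex; ring. Qed.

Lemma conj_cis t : conjc (cis t) = cis (- t).
Proof. by rewrite /cis cosN sinN. Qed.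

Lemma cisN t : cis (- t) = (cis t)^-1.
Proof. by apply/esym/mulr1_eq; rewrite -cisD subrr cis0. Qed.

Lemma cisMn t k : cis t ^+ k = cis (k%:R * t).
Proof.
elim: k => [|k IH]; first by rewrite mul0r cis0.
by rewrite exprS IH -cisD mulrSr mulrDl mul1r addrC.
Qed.

Lemma cisXz t (m : int) : cis t ^ m = cis (m%:~R * t).
Proof.
case: m => k; first by rewrite -exprnP cisMn.
by rewrite NegzE -exprnN cisMn -cisN intrN mulNr.
Qed.

End PolarForm.

Section DFT.
Variables (R : realType) (n : nat).
Hypothesis n_gt0 : (0 < n)%N.
Local Notation C := R[i].
Local Notation K := ((n - 1)./2)%N.
Local Notation Re := (@complex.Re R).
Local Notation Im := (@complex.Im R).

Definition omega : C := cis (2 * pi / n%:R).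

Lemma natrn_neq0 : n%:R != 0 :> R.
Proof. by rewrite pnatr_eq0 -lt0n. Qed.

Lemma omega_expr k p : omega ^+ (k * p) = cis (ang R n k p).
Proof. by rewrite /omega cisMn /ang natrM; congr cis; ring. Qed.

Lemma omega_n : omega ^+ n = 1.
Proof.
rewrite /omega cisMn (_ : _ * _ = pi *+ 2); first by rewrite /cis cos2pi sin2pi.
by rewrite -mulr_natr; field; exact: natrn_neq0.
Qed.

Lemma omega_half : ~~ odd n -> omega ^+ n./2 = -1.
Proof.
move=> even_n; rewrite /omega cisMn (_ : _ * _ = pi).
  by apply/eqP; rewrite eq_complex /= cospi sinpi oppr0 !eqxx.
have -> : n%:R = n./2%:R * 2 :> R by rewrite -natrM; congr _%:R; lia.
by field; rewrite pnatr_eq0 -lt0n half_gt0; lia.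
Qed.

Lemma omega_neq1 d : (0 < d < n)%N -> omega ^+ d != 1.
Proof.
move=> /andP[d_gt0 d_lt_n]; apply/negP; rewrite cisMn => /eqP[cos1 _].
pose s : R := pi * (d%:R / n%:R).
have s_gt0 : 0 < s by rewrite mulr_gt0 ?pi_gt0 ?divr_gt0 ?ltr0n.
have s_lt_pi : s < pi.
  by rewrite -[ltRHS]mulr1 ltr_pM2l ?pi_gt0 // ltr_pdivrMr ?ltr0n // mul1r ltr_nat.
have sin_gt0 : 0 < sin s by apply: sin_gt0_pi; rewrite s_gt0 s_lt_pi.
have twice_s : d%:R * (2 * pi / n%:R) = s *+ 2 by rewrite /s -mulr_natr; ring.
by rewrite twice_s cos_mulr2n cos2sin2 mulr2n in cos1; nra.
Qed.

Lemma prim_omega : n.-primitive_root omega.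
Proof.
apply/andP; split=> //; apply/forallP => i; rewrite unity_rootE.
have [->|ne] := eqVneq i.+1 n; first by rewrite omega_n !eqxx.
by rewrite (negbTE (omega_neq1 _)) //; have := ltn_ord i; lia.
Qed.

Lemma sum_omega_expr a :
  \sum_(p < n) omega ^+ (a * p) = if (n %| a)%N then n%:R else 0.
Proof.
under eq_bigr do rewrite exprM.
rewrite (prim_order_dvd prim_omega); case: eqP => [->|/eqP z_neq1].
  by under eq_bigr do rewrite expr1n; rewrite sumr_const card_ord.
have : omega ^+ a ^+ n - 1 = 0 by rewrite exprAC omega_n expr1n subrr.
by rewrite subrX1 => /eqP; rewrite mulf_eq0 subr_eq0 (negbTE z_neq1) => /eqP.
Qed.

Lemma dvdn_add_sub p q : (p < n)%N -> (q < n)%N -> (n %| q + (n - p))%N = (p == q).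
Proof.
move=> p_lt q_lt; apply/idP/eqP => [/dvdnP[k eq_k]|<-].
  have k1 : k = 1%N by nia.
  by move: eq_k; rewrite k1 mul1n; lia.
by rewrite subnKC ?dvdnn // ltnW.
Qed.

Lemma sum_omega_orth p q : (p < n)%N -> (q < n)%N ->
  \sum_(j < n) omega ^+ ((q + (n - p)) * j) = if p == q then n%:R else 0.
Proof. by move=> p_lt q_lt; rewrite sum_omega_expr dvdn_add_sub. Qed.

Lemma conj_omega_expr a : (a <= n)%N -> conjc (omega ^+ a) = omega ^+ (n - a).
Proof.
move=> a_le; rewrite /omega !cisMn conj_cis natrB // mulrBl cisD -cisMn -/omega.
by rewrite omega_n mul1r.
Qed.

Lemma omega_swap i p : (i <= n)%N -> (p <= n)%N ->
  omega ^+ (i * (n - p)) = omega ^+ ((n - i) * p).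
Proof.
move=> i_le p_le.
by rewrite mulnC !exprM -!conj_omega_expr // -!conjcXn -!exprM mulnC.
Qed.

Definition dft (x : ncx R n) (j : nat) : C := \sum_(p < n) (x p)%:C * omega ^+ (j * p).

(* Taking [Re] loses nothing on hermitian spectra, whose synthesis is real
   ([sum_hermitian]). *)
Definition idft (g : nat -> C) : ncx R n :=
  fun p => n%:R^-1 * Re (\sum_(j < n) g j * omega ^+ (j * (n - p))).

Lemma sum_ord_modn (V : nmodType) (F : nat -> V) s :
  \sum_(q < n) (if (s %% n == q)%N then F q else 0) = F (s %% n)%N.
Proof.
by rewrite -big_mkcond (big_pred1 (Ordinal (ltn_pmod s n_gt0))).
Qed.

Lemma dft_mul u w j : dft (ncx_mul u w) j = dft u j * dft w j.
Proof.
have conv q : (ncx_mul u w q)%:C * omega ^+ (j * q) = \sum_(a < n) \sum_(b < n)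
    (if ((a + b) %% n == q)%N then (u a * w b)%:C * omega ^+ (j * q) else 0).
  rewrite rmorph_sum mulr_suml; apply: eq_bigr => a _.
  rewrite rmorph_sum mulr_suml; apply: eq_bigr => b _.
  by case: ifP; rewrite ?rmorph0 ?mul0r.
rewrite /dft (eq_bigr _ (fun q _ => conv q)) exchange_big mulr_suml.
apply: eq_bigr => a _; rewrite exchange_big mulr_sumr; apply: eq_bigr => b _.
rewrite (sum_ord_modn (fun q => (u a * w b)%:C * omega ^+ (j * q))).
rewrite mulnC exprM (prim_expr_mod prim_omega) -exprM.
by rewrite mulnC mulnDr exprD rmorphM mulrACA.
Qed.

Lemma dft_one j : dft (@ncx_one R n) j = 1.
Proof.
rewrite /dft /ncx_one (bigD1 (Ordinal n_gt0)) //= muln0 mulr1 big1 ?addr0 // => q.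
by rewrite -val_eqE /= => /negbTE ->; rewrite mul0r.
Qed.

Lemma dft_npow x k j : dft (ncx_npow x k) j = dft x j ^+ k.
Proof.
elim: k => [|k IH]; first by rewrite dft_one.
by rewrite /ncx_npow iterS -/(ncx_npow x k) dft_mul IH exprS.
Qed.

Lemma dft_modn x j : dft x (j %% n) = dft x j.
Proof. by apply: eq_bigr => p _; rewrite !exprM (prim_expr_mod prim_omega). Qed.

Lemma dft_conj x k : (k <= n)%N -> dft x (n - k) = conjc (dft x k).
Proof.
move=> k_le; rewrite /dft conjc_sum; apply: eq_bigr => p _.
by rewrite conjcM conjc_real_complex !exprM -conj_omega_expr // !conjcXn.
Qed.

Lemma dft0 x : dft x 0 = (v_plus x)%:C.
Proof. by rewrite /dft rmorph_sum; apply: eq_bigr => p _; rewrite mulr1. Qed.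

Lemma dft_half x : ~~ odd n -> dft x n./2 = (v_minus x)%:C.
Proof.
move=> ev; rewrite /dft rmorph_sum; apply: eq_bigr => p _.
by rewrite exprM omega_half // rmorphM rmorphXn rmorphN1 mulrC.
Qed.

Lemma dft_canonical x k : dft x k = v_k x k +i* vt_k x k.
Proof.
rewrite /dft /v_k /vt_k.
elim/big_rec3: _ => [|p z a b _ ->]; first by [].
by rewrite omega_expr /cis; simpc; congr Complex; ring.
Qed.

Lemma norm_dft x k : `|dft x k| = (rho_k x k)%:C.
Proof. by rewrite normc_def dft_canonical. Qed.

Lemma sum_pairs (V : nmodType) (F : nat -> V) :
  \sum_(j < n) F j
  = F 0%N + (if odd n then 0 else F n./2) + \sum_(1 <= k < K.+1) (F k + F (n - k)%N).
Proof.
have tail : \sum_(n - K <= j < n) F j = \sum_(1 <= k < K.+1) F (n - k)%N.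
  rewrite (_ : (n - K = 1 + (n - K.+1))%N); last by lia.
  rewrite big_addn (_ : (n - (n - K.+1) = K.+1)%N); last by lia.
  rewrite [RHS]big_nat_rev; apply: eq_big_nat => k /andP[k1 kK].
  by rewrite (_ : (k + (n - K.+1) = n - (1 + K.+1 - k.+1))%N) //; lia.
rewrite -(big_mkord xpredT) (big_ltn n_gt0) (@big_cat_nat _ _ _ K.+1) /=; [|lia|lia].
rewrite big_split /= -addrA; congr (_ + _); rewrite addrCA; congr (_ + _).
case: ifP => odd_n.
  by rewrite add0r -tail (_ : (n - K = K.+1)%N) //; lia.
rewrite (big_ltn (_ : K.+1 < n)%N); last by lia.
rewrite -tail (_ : (n - K = K.+2)%N); last by lia.
by rewrite (_ : n./2 = K.+1) //; lia.
Qed.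

Definition hermitian (g : nat -> C) :=
  forall k, (k < n)%N -> g ((n - k) %% n)%N = conjc (g k).

Lemma hermitian_dft_expz x (m : int) : hermitian (fun j => dft x j ^ m).
Proof. by move=> k k_lt; rewrite dft_modn dft_conj 1?ltnW // conjcXz. Qed.

Lemma real_complex_Re (z : C) : conjc z = z -> (Re z)%:C = z.
Proof. by case: z => a b [b_opp]; congr Complex; lra. Qed.

Lemma sum_hermitian g (p : 'I_n) : hermitian g ->
  \sum_(j < n) g j * omega ^+ (j * (n - p))
  = (Re (g 0%N) + (if odd n then 0 else Re (g n./2) * (-1) ^+ p)
     + \sum_(1 <= k < K.+1)
         (Re (g k) * cos (ang R n k p) + Im (g k) * sin (ang R n k p)) *+ 2)%:C.
Proof.
move=> hg; have p_le := ltnW (ltn_ord p).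
rewrite (sum_pairs (fun j => g j * omega ^+ (j * (n - p)))).
rewrite !rmorphD rmorph_sum /=; congr (_ + _ + _).
- have g0 := hg 0%N n_gt0; rewrite subn0 modnn in g0.
  by rewrite mul0n mulr1 real_complex_Re.
- case: ifPn => [_|even_n]; first by rewrite rmorph0.
  have [half_lt n_half] : (n./2 < n /\ n - n./2 = n./2)%N by lia.
  have gh := hg _ half_lt; rewrite n_half modn_small // in gh.
  rewrite omega_swap 1?ltnW // n_half exprM omega_half //.
  by rewrite -{1}(real_complex_Re (esym gh)) rmorphM rmorphXn rmorphN1.
- apply: eq_big_nat => k /andP[k1 kK].
  have [k_le [k_lt nk_lt]] : (k <= n /\ k < n /\ n - k < n)%N by lia.
  have gnk := hg _ k_lt; rewrite modn_small // in gnk.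
  (* the terms k and n - k are conjugate, and z + conj z = 2 Re z *)
  rewrite gnk !exprM -conj_omega_expr //.
  rewrite -conjcXn -conjcM addcJ -exprM omega_swap //.
  rewrite exprM -conj_omega_expr //.
  rewrite -conjcXn -exprM omega_expr conj_cis.
  case: (g k) => a b; rewrite /cis cosN sinN /=.
  by rewrite mulrN opprK mulr_natl rmorphMn.
Qed.

Lemma idft_dft y : idft (dft y) = y.
Proof.
apply: boolp.funext => p; rewrite /idft /dft.
under eq_bigr do rewrite mulr_suml.
rewrite exchange_big /=.
under eq_bigr => q _.
  under eq_bigr do rewrite -mulrA -exprD -mulnDr mulnC.
  rewrite -mulr_sumr (sum_omega_orth (ltn_ord p) (ltn_ord q)).
over.
rewrite (bigD1 p) //= eqxx big1 ?addr0 => [|q q_neq_p]; last first.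
  by rewrite val_eqE eq_sym (negbTE q_neq_p) mulr0.
by rewrite mulr_natr raddfMn /= -[y p *+ n]mulr_natl mulKf ?natrn_neq0.
Qed.

Lemma dft_idft g j : hermitian g -> (j < n)%N -> dft (idft g) j = g j.
Proof.
move=> hg j_lt.
have idft_real p : (idft g p)%:C = n%:R^-1 * \sum_(i < n) g i * omega ^+ (i * (n - p)).
  by rewrite /idft (sum_hermitian p hg) rmorphM fmorphV rmorph_nat.
rewrite /dft; under eq_bigr do rewrite idft_real -mulrA mulr_suml.
rewrite -mulr_sumr exchange_big /=.
under eq_bigr => i _.
  under eq_bigr => p _ do rewrite -mulrA omega_swap 1?ltnW // -exprD -mulnDl addnC.
  rewrite -mulr_sumr (sum_omega_orth (ltn_ord i) j_lt).
over.
rewrite /= (bigD1 (Ordinal j_lt)) //= eqxx big1 ?addr0 => [|i i_neq_j]; last first.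
  by rewrite ifN ?mulr0.
by rewrite mulrC mulfK // pnatr_eq0 -lt0n.
Qed.

Lemma dft_inj y z : (forall j, (j < n)%N -> dft y j = dft z j) -> y = z.
Proof.
move=> eq_dft; rewrite -(idft_dft y) -(idft_dft z); apply: boolp.funext => p.
by congr (_ * Re _); apply: eq_bigr => j _; rewrite eq_dft.
Qed.

Lemma dft_ncx_inv x : (forall j, (j < n)%N -> dft x j != 0) ->
  forall j, (j < n)%N -> dft (ncx_inv x) j = (dft x j)^-1.
Proof.
move=> dft_neq0.
have inv_exists : exists w, ncx_mul x w = @ncx_one R n.
  exists (idft (fun j => dft x j ^ -1)); apply: dft_inj => j j_lt.
  rewrite dft_mul (dft_idft (hermitian_dft_expz x (-1)) j_lt) exprN1.
  by rewrite mulfV ?dft_neq0 // dft_one.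
have x_inv := epsilon_spec (inhabits (@ncx_one R n)) _ inv_exists.
by move=> j j_lt; apply/esym/mulr1_eq; rewrite -dft_mul x_inv dft_one.
Qed.

Lemma dft_zpow x (m : int) : (m <= 0 -> forall j, (j < n)%N -> dft x j != 0) ->
  forall j, (j < n)%N -> dft (ncx_zpow x m) j = dft x j ^ m.
Proof.
case: m => k dft_neq0 j j_lt; first by rewrite dft_npow.
by rewrite /ncx_zpow dft_npow dft_ncx_inv ?exprVn //; exact: dft_neq0.
Qed.

Lemma dft_neq0 x : v_plus x != 0 -> (~~ odd n -> v_minus x != 0) ->
  (forall k, (1 <= k <= K)%N -> rho_k x k != 0) ->
  forall j, (j < n)%N -> dft x j != 0.
Proof.
move=> vp_neq0 vm_neq0 rho_neq0 j j_lt.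
wlog j_half : j j_lt / (j.*2 <= n)%N => [hwlog|].
  have [|half_lt] := leqP j.*2 n; first exact: hwlog.
  rewrite -[j](subKn (ltnW j_lt)) dft_conj ?leq_subr // conjc_eq0 hwlog //; lia.
have [->|j_gt0] := posnP j; first by rewrite dft0 fmorph_eq0.
have [j_eq|j_neq] := eqVneq j.*2 n.
  by rewrite (_ : j = n./2) ?dft_half ?fmorph_eq0 ?vm_neq0 //; lia.
by rewrite -normr_eq0 norm_dft fmorph_eq0 rho_neq0 //; lia.
Qed.

Lemma dft_expz_polar x (m : int) k phi : (m <= 0 -> rho_k x k != 0) ->
  (0 < rho_k x k ->
     cos phi = v_k x k / rho_k x k /\ sin phi = vt_k x k / rho_k x k) ->
  dft x k ^ m
  = if rho_k x k == 0 then 0 else (rho_k x k ^ m)%:C * cis (m%:~R * phi).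
Proof.
move=> rho_neq0 polar; case: eqP => [rho0|/eqP rho_neq].
  have dft_k0 : dft x k = 0 by apply/eqP; rewrite -normr_eq0 norm_dft rho0.
  have m_gt0 : 0 < m by rewrite ltNge; apply/negP => /rho_neq0; rewrite rho0 eqxx.
  by rewrite dft_k0 exp0rz gt_eqF.
have rho_gt0 : 0 < rho_k x k by rewrite lt_def rho_neq sqrtr_ge0.
have [cos_phi sin_phi] := polar rho_gt0.
have -> : dft x k = (rho_k x k)%:C * cis phi.
  by rewrite dft_canonical /cis cos_phi sin_phi; simpc; congr Complex; field.
by rewrite expfzMl -fmorphXz cisXz.
Qed.

Lemma ncx_zpow_canonical x (m : int) (phi : nat -> R) :
  (m <= 0 -> [/\ v_plus x != 0, (~~ odd n -> v_minus x != 0)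
               & forall k, (1 <= k <= K)%N -> rho_k x k != 0]) ->
  (forall k, (1 <= k <= K)%N -> 0 < rho_k x k ->
     cos (phi k) = v_k x k / rho_k x k /\ sin (phi k) = vt_k x k / rho_k x k) ->
  ncx_zpow x m = fun p : 'I_n =>
    e_plus R p * v_plus x ^ m + (if odd n then 0 else e_minus R p * v_minus x ^ m)
    + \sum_(1 <= k < K.+1)
        (if rho_k x k == 0 then 0 else
         rho_k x k ^ m * (e_k R k p * cos (m%:~R * phi k)
                          + et_k R k p * sin (m%:~R * phi k))).
Proof.
move=> hneg hphi.
have dft_zpow_x : forall j, (j < n)%N -> dft (ncx_zpow x m) j = dft x j ^ m.
  by apply: dft_zpow => /hneg[]; exact: dft_neq0.
rewrite -[ncx_zpow x m]idft_dft; apply: boolp.funext => p; rewrite /idft.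
under eq_bigr => j _ do rewrite dft_zpow_x //.
rewrite (sum_hermitian p (hermitian_dft_expz x m)) !mulrDr mulr_sumr.
congr (_ + _ + _).
- by rewrite dft0 -fmorphXz.
- case: ifPn => [_|even_n]; first by rewrite mulr0.
  by rewrite dft_half // -fmorphXz /= /e_minus; ring.
- apply: eq_big_nat => k /andP[k1 kK].
  have k_in : (1 <= k <= K)%N by rewrite k1 -ltnS.
  have rho_neq0 : m <= 0 -> rho_k x k != 0 by case/hneg=> _ _; apply.
  rewrite (dft_expz_polar rho_neq0 (hphi k k_in)).
  case: ifP => _; first by rewrite /= !mul0r addr0 mul0rn mulr0.
  by rewrite /= /e_k /et_k; ring.
Qed.

End DFT.

Theorem mainTheorem11 (R : realType) (n : nat) (hn : (2 <= n)%N)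
  (x : ncx R n) (m : int)
  (hneg : m <= 0 ->
     [/\ v_plus x != 0,
         (~~ odd n -> v_minus x != 0)
       & forall k : nat, (1 <= k <= (n - 1)./2)%N -> rho_k x k != 0])
  (phi : nat -> R)
  (hphi : forall k : nat, (1 <= k <= (n - 1)./2)%N -> 0 < rho_k x k ->
     cos (phi k) = v_k x k / rho_k x k /\ sin (phi k) = vt_k x k / rho_k x k) :
  (~~ odd n ->
     ncx_zpow x m =
     (fun p : 'I_n =>
        e_plus R p * v_plus x ^ m + e_minus R p * v_minus x ^ m
        + \sum_(1 <= k < (n./2 - 1).+1)
            (if rho_k x k == 0 then 0 else
             rho_k x k ^ m * (e_k R k p * cos (m%:~R * phi k)
                              + et_k R k p * sin (m%:~R * phi k)))))
  /\
  (odd n ->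
     ncx_zpow x m =
     (fun p : 'I_n =>
        e_plus R p * v_plus x ^ m
        + \sum_(1 <= k < ((n - 1)./2).+1)
            (if rho_k x k == 0 then 0 else
             rho_k x k ^ m * (e_k R k p * cos (m%:~R * phi k)
                              + et_k R k p * sin (m%:~R * phi k))))).
Proof.
have n_gt0 : (0 < n)%N by apply: leq_trans hn.
rewrite (ncx_zpow_canonical n_gt0 hneg hphi); split=> [even_n|odd_n].
  by rewrite (negbTE even_n) (_ : (n./2 - 1 = (n - 1)./2)%N) //; lia.
by apply: boolp.funext => p; rewrite odd_n addr0.
Qed.
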